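(* For every natural number $\alpha<\omega$ and every $n\in\mathbb N$, $n\ge1$, \[ f_{(\omega^{\omega^\alpha})^n}\in d_{1/2}^{\omega^{1+\alpha}\cdot n}\Big(B_{\ell_1([0,(\omega^{\omega^\alpha})^n])}\Big). \]
   Context: Ordinal arithmetic throughout. For an ordinal $\gamma$, $[0,\gamma]$ has the order topology and $\ell_1([0,\gamma])$ is identified with $C([0,\gamma])^*$ (weak$^*$-topology accordingly). For $\beta\le\gamma$, $f_\beta\in\ell_1([0,\gamma])$ is the indicator of $\{\beta\}$. For a weak$^*$-compact $K$ in a dual $X^*$: $H(x,t)=\{x^*: x^*(x)>t\}$; a weak$^*$-slice of $K$ is a nonempty $H(x,t)\cap K$; $d_\varepsilon K$ is $K$ minus the union of all weak$^*$-slices of $K$ of norm diameter $<\varepsilon$; $d_\varepsilon^0K=K$, $d_\varepsilon^{\beta+1}K=d_\varepsilon(d_\varepsilon^\beta K)$, $d_\varepsilon^\beta K=\bigcap_{\mu<\beta}d_\varepsilon^\mu K$ for limit $\beta$. *)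

From Stdlib Require Import Reals List Arith Bool.
Open Scope R_scope.

(** * Ordinals below epsilon_0 in Cantor normal form.
    [ocons a n b] denotes  omega^a * (S n) + b. *)
Inductive T1 : Set :=
| zero : T1
| ocons : T1 -> nat -> T1 -> T1.

Fixpoint compare (x y : T1) : comparison :=
  match x, y with
  | zero, zero => Eq
  | zero, ocons _ _ _ => Lt
  | ocons _ _ _, zero => Gt
  | ocons a n b, ocons a' n' b' =>
      match compare a a' with
      | Lt => Lt
      | Gt => Gt
      | Eq => match Nat.compare n n' with
              | Lt => Lt
              | Gt => Gt
              | Eq => compare b b'
              end
      end
  end.

Definition ltb (x y : T1) : bool :=
  match compare x y with Lt => true | _ => false end.
Definition leb (x y : T1) : bool :=
  match compare x y with Gt => false | _ => true end.

Fixpoint nfb (x : T1) : bool :=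
  match x with
  | zero => true
  | ocons a _ b =>
      nfb a && nfb b &&
      match b with zero => true | ocons a' _ _ => ltb a' a end
  end.

Fixpoint oplus (x y : T1) : T1 :=
  match x, y with
  | zero, _ => y
  | _, zero => x
  | ocons a n b, ocons a' n' b' =>
      match compare a a' with
      | Lt => y
      | Gt => ocons a n (oplus b y)
      | Eq => ocons a (S (n + n')) b'
      end
  end.

Fixpoint omult (x y : T1) {struct y} : T1 :=
  match x, y with
  | zero, _ => zero
  | _, zero => zero
  | ocons a n b, ocons zero n' _ => ocons a (n * n' + n + n') b
  | _, ocons a' n' b' => oplus (ocons (oplus (match x with ocons a _ _ => a | zero => zero end) a') n' zero) (omult x b')
  end.

Definition fin (k : nat) : T1 :=
  match k with 0%nat => zero | S k' => ocons zero k' zero end.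

Definition omega_pow (x : T1) : T1 := ocons x 0 zero.

Definition opow_nat (x : T1) (k : nat) : T1 :=
  Nat.iter k (fun y => omult y x) (fin 1).

(** * The compact space [0, gamma] with the order topology. *)
Definition P (g : T1) : Set := { b : T1 | nfb b && leb b g = true }.

Definition ltP {g} (a b : P g) : Prop := ltb (proj1_sig a) (proj1_sig b) = true.

(** Basic open intervals of the order topology: (lo, hi), where a missing
    endpoint means "unbounded on that side". *)
Definition in_interval {g} (lo hi : option (P g)) (y : P g) : Prop :=
  (match lo with None => True | Some a => ltP a y end) /\
  (match hi with None => True | Some c => ltP y c end).

Definition continuous {g} (x : P g -> R) : Prop :=
  forall b (eps : R), 0 < eps ->
    exists lo hi, in_interval lo hi b /\
      forall y, in_interval lo hi y -> Rabs (x y - x b) < eps.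

Fixpoint sumlist {g} (f : P g -> R) (l : list (P g)) : R :=
  match l with nil => 0 | b :: l' => f b + sumlist f l' end.

Definition has_sum {g} (f : P g -> R) (L : R) : Prop :=
  forall eps, 0 < eps ->
    exists F0 : list (P g), NoDup F0 /\
      forall F : list (P g), NoDup F -> incl F0 F ->
        Rabs (sumlist f F - L) < eps.

Definition l1_norm_le {g} (mu : P g -> R) (r : R) : Prop :=
  forall F : list (P g), NoDup F -> sumlist (fun b => Rabs (mu b)) F <= r.

Definition ball (g : T1) (mu : P g -> R) : Prop := l1_norm_le mu 1.

Definition indicator (g beta : T1) (b : P g) : R :=
  if ltb (proj1_sig b) beta || ltb beta (proj1_sig b) then 0 else 1.

(** Duality C([0,gamma])^* = ell_1: x^*(x) > t. *)
Definition pair_gt {g} (mu : P g -> R) (x : P g -> R) (t : R) : Prop :=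
  exists L, has_sum (fun b => mu b * x b) L /\ t < L.

Definition slice {g} (K : (P g -> R) -> Prop) (x : P g -> R) (t : R)
  : (P g -> R) -> Prop :=
  fun mu => K mu /\ pair_gt mu x t.

Definition diam_lt {g} (S : (P g -> R) -> Prop) (eps : R) : Prop :=
  exists r, r < eps /\
    forall mu nu, S mu -> S nu -> l1_norm_le (fun b => mu b - nu b) r.

Definition d_eps {g} (eps : R) (K : (P g -> R) -> Prop) : (P g -> R) -> Prop :=
  fun mu => K mu /\
    ~ (exists (x : P g -> R) (t : R),
          continuous x /\ slice K x t mu /\ diam_lt (slice K x t) eps).

Definition is_derivation (g : T1) (eps : R) (K : (P g -> R) -> Prop) (Bd : T1)
  (D : T1 -> (P g -> R) -> Prop) : Prop :=
  (forall mu, D zero mu <-> K mu) /\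
  (forall b, nfb b = true -> ltb b Bd = true ->
     forall mu, D (oplus b (fin 1)) mu <-> d_eps eps (D b) mu) /\
  (forall b, nfb b = true -> leb b Bd = true -> b <> zero ->
     (forall c, nfb c = true -> b <> oplus c (fin 1)) ->
     forall mu, D b mu <-> (forall c, nfb c = true -> ltb c b = true -> D c mu)).

(** Let g = (omega^(omega^alpha))^n, so that g = omega^(omega^alpha * n) has a
    single Cantor term with exponent e(g) = omega^alpha * n, and the target
    index is omega^(1+alpha) * n = omega * e(g).

    For an ordinal beta write e(beta) for the exponent of the last term of its
    Cantor normal form (so beta is approached from the left by ordinals of
    last exponent as large as any theta < e(beta)).  The proof is a single
    transfinite induction on the derivation index c showing simultaneously:

    (P) f_beta belongs to D_c whenever c <= omega * e(beta);
    (A) if c < omega * e(beta), every interval (lo, beta) carries a finitely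
        supported probability measure lying in D_c.

    Successor steps: a weak*-slice containing f_beta is determined by a
    continuous x, hence also contains the measures given by (A) just left of
    beta, which are at distance 1 from f_beta; and the average of two
    measures from (A) with disjoint supports stays in D_(c+1) because every
    slice containing it contains one of them, at distance 1/2 (lemma
    [D_avg] shows that D_c is closed under such averages).  Limit steps: for
    (A) pick gamma in (lo, beta) with c <= omega * e(gamma) and use (P). *)

From Stdlib Require Import Reals List Arith Bool Lia Lra Permutation Eqdep_dec
  ClassicalEpsilon FunctionalExtensionality.
Open Scope R_scope.

Local Notation "x <o y" := (compare x y = Lt) (at level 70, no associativity).
Local Notation "x <=o y" := (compare x y <> Gt) (at level 70, no associativity).
Local Notation succ c := (oplus c (fin 1)).

Lemma compare_refl x : compare x x = Eq.
Proof. induction x; simpl; auto. rewrite IHx1, Nat.compare_refl; auto. Qed.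

Lemma compare_eq x y : compare x y = Eq -> x = y.
Proof.
  revert y; induction x as [|a IHa n b IHb]; destruct y as [|a' n' b'];
    simpl; try discriminate; auto.
  destruct (compare a a') eqn:E1; try discriminate.
  destruct (Nat.compare n n') eqn:E2; try discriminate.
  intro E3. apply IHa in E1. apply Nat.compare_eq in E2. apply IHb in E3.
  subst; auto.
Qed.

Lemma compare_sym x y : compare y x = CompOpp (compare x y).
Proof.
  revert y; induction x as [|a IHa n b IHb]; destruct y as [|a' n' b']; simpl; auto.
  rewrite (IHa a'). destruct (compare a a'); simpl; auto.
  rewrite (Nat.compare_antisym n n'). destruct (Nat.compare n n'); simpl; auto.
Qed.

Lemma lt_ocons a n b a' n' b' :
  ocons a n b <o ocons a' n' b' <->
  a <o a' \/ (a = a' /\ ((n < n')%nat \/ (n = n' /\ b <o b'))).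
Proof.
  simpl. destruct (compare a a') eqn:E1.
  - apply compare_eq in E1; subst. destruct (Nat.compare n n') eqn:E2.
    + apply Nat.compare_eq in E2; subst. split; intro H; auto.
      destruct H as [H|[_ [H|[_ H]]]]; auto; try discriminate; lia.
    + apply Nat.compare_lt_iff in E2. split; auto.
    + apply Nat.compare_gt_iff in E2. split; try discriminate.
      intros [H|[_ [H|[H _]]]]; try discriminate; lia.
  - split; auto.
  - split; try discriminate. intros [H|[H _]]; try discriminate.
    subst. rewrite compare_refl in E1; discriminate.
Qed.

Lemma compare_ocons_eq a n b b' : compare (ocons a n b) (ocons a n b') = compare b b'.
Proof. simpl. rewrite compare_refl, Nat.compare_refl. auto. Qed.

Lemma lt_trans x y z : x <o y -> y <o z -> x <o z.
Proof.
  revert y z; induction x as [|a IHa n b IHb]; destruct y as [|a' n' b'];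
    destruct z as [|a'' n'' b'']; simpl; auto; try discriminate.
  intros H1 H2. apply lt_ocons in H1. apply lt_ocons in H2. apply lt_ocons.
  destruct H1 as [H1|[-> [H1|[-> H1]]]]; destruct H2 as [H2|[<- [H2|[<- H2]]]];
   first [left; eapply IHa; eassumption | left; assumption | right; split; [reflexivity|]];
   first [left; lia | right; split; [reflexivity| eapply IHb; eassumption]].
Qed.

Lemma ltb_iff x y : ltb x y = true <-> x <o y.
Proof. unfold ltb. destruct (compare x y); split; congruence. Qed.

Lemma leb_iff x y : leb x y = true <-> x <=o y.
Proof. unfold leb. destruct (compare x y); split; congruence. Qed.

Lemma lt_le x y : x <o y -> x <=o y.
Proof. congruence. Qed.

Lemma lt_irrefl x : ~ x <o x.
Proof. rewrite compare_refl; congruence. Qed.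

Lemma le_lt_trans x y z : x <=o y -> y <o z -> x <o z.
Proof.
  intros H1 H2. destruct (compare x y) eqn:E; try congruence.
  - apply compare_eq in E; subst; auto.
  - eapply lt_trans; eauto.
Qed.

Lemma lt_le_trans x y z : x <o y -> y <=o z -> x <o z.
Proof.
  intros H1 H2. destruct (compare y z) eqn:E; try congruence.
  - apply compare_eq in E; subst; auto.
  - eapply lt_trans; eauto.
Qed.

Lemma le_trans x y z : x <=o y -> y <=o z -> x <=o z.
Proof.
  intros H1 H2. destruct (compare x y) eqn:E; try congruence.
  - apply compare_eq in E; subst; auto.
  - apply lt_le, (lt_le_trans x y z); auto.
Qed.

Lemma le_antisym x y : x <=o y -> y <=o x -> x = y.
Proof.
  intros H1 H2. rewrite compare_sym in H2.
  destruct (compare x y) eqn:E; simpl in *; try congruence. apply compare_eq; auto.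
Qed.

(** ** Well-foundedness of the order on normal forms *)

(** [below a y]: the leading exponent of [y] is smaller than [a], i.e.
    [ocons a n y] is a legal Cantor normal form head. *)
Definition below (a y : T1) : bool :=
  match y with zero => true | ocons a' _ _ => ltb a' a end.

Lemma nfb_ocons a n b :
  nfb (ocons a n b) = true <-> nfb a = true /\ nfb b = true /\ below a b = true.
Proof. simpl. destruct b; simpl; rewrite ?andb_true_iff; tauto. Qed.

Definition ltnf (y x : T1) : Prop := nfb y = true /\ y <o x.

Lemma acc_zero : Acc ltnf zero.
Proof. constructor. intros [|] [_ H]; discriminate. Qed.

Lemma acc_ocons a : Acc ltnf a ->
  forall n b, nfb b = true -> below a b = true -> Acc ltnf (ocons a n b).
Proof.
  induction 1 as [a _ IHa]. intro n. induction n as [n IHn] using lt_wf_ind.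
  intros b Hb Hab.
  assert (Ab : Acc ltnf b).
  { destruct b as [|a2 n2 b2]. apply acc_zero.
    apply nfb_ocons in Hb as (H1&H2&H3). apply IHa; auto. split; auto.
    apply ltb_iff; auto. }
  revert Hb Hab. induction Ab as [b _ IHb]. intros Hb Hab.
  constructor. intros y [Hy Hlt]. destruct y as [|a' n' b']. apply acc_zero.
  apply lt_ocons in Hlt. apply nfb_ocons in Hy as (H1&H2&H3).
  destruct Hlt as [H|[-> [H|[-> H]]]].
  - apply IHa; auto. split; auto.
  - apply IHn; auto.
  - apply IHb; auto. split; auto.
Qed.

Lemma ltnf_wf : well_founded ltnf.
Proof.
  assert (acc_nf : forall x, nfb x = true -> Acc ltnf x).
  { induction x as [|a IHa n b IHb]; intro H. apply acc_zero.
    apply nfb_ocons in H as (H1&H2&H3). apply acc_ocons; auto. }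
  intro x. constructor. intros y [Hy _]. apply acc_nf; auto.
Qed.

Lemma below_mono a x y : below a y = true -> x <=o y -> below a x = true.
Proof.
  destruct x as [|a1 n1 b1]; destruct y as [|a2 n2 b2]; simpl; auto; try congruence.
  intros H1 H2. apply ltb_iff in H1. apply ltb_iff.
  apply (le_lt_trans _ a2); auto. simpl in H2. destruct (compare a1 a2); congruence.
Qed.

Lemma nf_fin_tail n b : nfb (ocons zero n b) = true -> b = zero.
Proof.
  intro H. apply nfb_ocons in H as (_&_&H). destruct b as [|[] ? ?]; auto; discriminate.
Qed.

Lemma succ_fin n : succ (ocons zero n zero) = ocons zero (S n) zero.
Proof. simpl. rewrite Nat.add_0_r. auto. Qed.

Lemma succ_ocons a n b : a <> zero -> succ (ocons a n b) = ocons a n (succ b).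
Proof. destruct a; [congruence|]. reflexivity. Qed.

Lemma succ_nonzero c : succ c <> zero.
Proof. destruct c as [|[|] ? ?]; simpl; discriminate. Qed.

(** [succ c] is the successor of [c] among normal forms: it is a normal form
    above [c], and nothing lies strictly between.  (The [below] clause is the
    invariant that makes the induction go through.) *)
Lemma succ_spec c : nfb c = true ->
  nfb (succ c) = true /\ c <o succ c /\
  (forall a, a <> zero -> below a c = true -> below a (succ c) = true) /\
  (forall d, nfb d = true -> d <o succ c -> d <=o c).
Proof.
  induction c as [|a IHa n b IHb]; intro H.
  - simpl. repeat split; auto.
    + intros [] Ha _; [congruence|reflexivity].
    + intros [|a' n' b'] Hd Hl; simpl; try congruence.
      apply lt_ocons in Hl. destruct Hl as [Hl|[-> [Hl|[-> Hl]]]]; try lia.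
      destruct a'; discriminate. destruct b'; discriminate.
  - destruct a as [|a1 n1 b1].
    + pose proof (nf_fin_tail _ _ H); subst b. rewrite succ_fin.
      repeat split; auto.
      * apply lt_ocons. right. split; auto.
      * intros [|a' n' b'] Hd Hl; simpl; try congruence.
        apply lt_ocons in Hl. destruct Hl as [Hl|[-> [Hl|[-> Hl]]]].
        -- destruct a'; discriminate.
        -- rewrite (nf_fin_tail _ _ Hd). simpl.
           destruct (Nat.compare n' n) eqn:E; try congruence.
           apply Nat.compare_gt_iff in E. lia.
        -- destruct b'; discriminate.
    + rewrite succ_ocons by discriminate.
      apply nfb_ocons in H as (H1&H2&H3). destruct (IHb H2) as (S1&S2&S3&S4).
      repeat split; auto.
      * apply nfb_ocons. repeat split; auto. apply S3; auto. discriminate.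
      * rewrite compare_ocons_eq. auto.
      * intros [|a' n' b'] Hd Hl; [simpl; discriminate|].
        apply lt_ocons in Hl. destruct Hl as [Hl|[-> [Hl|[-> Hl]]]].
        -- apply lt_le, lt_ocons; auto.
        -- apply lt_le, lt_ocons; auto.
        -- apply nfb_ocons in Hd as (_&Hd&_). rewrite compare_ocons_eq in *. auto.
Qed.

Lemma lt_succ c : nfb c = true -> c <o succ c.
Proof. intro H. apply succ_spec; auto. Qed.

Lemma succ_inj b c : nfb b = true -> nfb c = true -> succ b = succ c -> b = c.
Proof.
  intros Hb Hc E.
  destruct (succ_spec b Hb) as (_&B2&_&B4). destruct (succ_spec c Hc) as (_&C2&_&C4).
  apply le_antisym; [apply C4 | apply B4]; auto; congruence.
Qed.

Definition is_limit (c : T1) : Prop :=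
  c <> zero /\ forall c', nfb c' = true -> c <> succ c'.

Lemma T1_eq_dec (x y : T1) : {x = y} + {x <> y}.
Proof. decide equality. apply Nat.eq_dec. Defined.

Lemma zero_succ_or_limit c :
  c = zero \/ (exists c', nfb c' = true /\ c = succ c') \/ is_limit c.
Proof.
  destruct (T1_eq_dec c zero); auto. right.
  destruct (Classical_Prop.classic (exists c', nfb c' = true /\ c = succ c')) as [E|E];
    auto.
  right. split; auto. intros c' Hc' Ec. apply E. eauto.
Qed.

Fixpoint allpos x : Prop :=
  match x with zero => True | ocons a _ b => a <> zero /\ allpos b end.

Lemma limit_allpos c : nfb c = true -> is_limit c -> allpos c.
Proof.
  intros H [_ Hs]. revert H Hs.
  induction c as [|a IHa n b IHb]; intros H Hs; simpl; auto.
  destruct a as [|a1 n1 b1].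
  - pose proof (nf_fin_tail _ _ H); subst b. exfalso. destruct n as [|m].
    + apply (Hs zero); reflexivity.
    + apply (Hs (ocons zero m zero)); [reflexivity|]. rewrite succ_fin; auto.
  - split; [discriminate|]. apply nfb_ocons in H as (H1&H2&H3). apply IHb; auto.
    intros b' Hb' E. apply (Hs (ocons (ocons a1 n1 b1) n b')).
    + apply nfb_ocons. repeat split; auto. apply (below_mono _ _ b); auto.
      rewrite E. apply lt_le, lt_succ; auto.
    + rewrite succ_ocons by discriminate. rewrite E; auto.
Qed.

(** ** The ordinal omega * x *)

(** [onep a] is 1 + a, hence omega^(onep a) = omega * omega^a. *)
Definition onep a := oplus (fin 1) a.

Lemma onep_compare x y : compare (onep x) (onep y) = compare x y.
Proof. unfold onep. destruct x as [|[|] ? ?], y as [|[|] ? ?]; simpl; auto. Qed.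

(** [mulw x] is omega * x, computed termwise on the Cantor normal form. *)
Fixpoint mulw x :=
  match x with zero => zero | ocons a n b => ocons (onep a) n (mulw b) end.

Lemma mulw_compare x y : compare (mulw x) (mulw y) = compare x y.
Proof.
  revert y; induction x as [|a IHa n b IHb]; destruct y as [|a' n' b']; auto.
  simpl. rewrite onep_compare, IHb. auto.
Qed.

(** [onem] inverts [onep] on nonzero exponents, and [divw] inverts [mulw] on
    limit ordinals: every limit is omega * x for some x. *)
Definition onem a :=
  match a with ocons zero 0 _ => zero | ocons zero (S m) b => ocons zero m b | _ => a end.

Fixpoint divw x :=
  match x with zero => zero | ocons a n b => ocons (onem a) n (divw b) end.

Lemma onep_onem a : nfb a = true -> a <> zero -> onep (onem a) = a.
Proof.
  intros H Hz. destruct a as [|[|a1 n1 b1] n b]; try congruence.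
  - rewrite (nf_fin_tail _ _ H). destruct n; reflexivity.
  - reflexivity.
Qed.

Lemma nf_onem a : nfb a = true -> nfb (onem a) = true.
Proof.
  intros H. destruct a as [|[|a1 n1 b1] n b]; auto.
  rewrite (nf_fin_tail _ _ H). destruct n; reflexivity.
Qed.

Lemma mulw_divw c : nfb c = true -> allpos c -> mulw (divw c) = c.
Proof.
  induction c as [|a IHa n b IHb]; intros H Hp; simpl; auto.
  apply nfb_ocons in H as (H1&H2&H3). destruct Hp as [Ha Hb].
  rewrite onep_onem, IHb; auto.
Qed.

Lemma nf_divw c : nfb c = true -> allpos c -> nfb (divw c) = true.
Proof.
  induction c as [|a IHa n b IHb]; intros H Hp; simpl; auto.
  apply nfb_ocons in H as (H1&H2&H3). destruct Hp as [Ha Hb].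
  change (nfb (ocons (onem a) n (divw b)) = true). apply nfb_ocons.
  repeat split; [apply nf_onem; auto | apply IHb; auto |].
  destruct b as [|a2 n2 b2]; auto. simpl. destruct Hb as [Ha2 _].
  apply nfb_ocons in H2 as (H21&_). simpl in H3.
  apply ltb_iff. rewrite <- onep_compare, !onep_onem; auto. apply ltb_iff; auto.
Qed.

(** ** Approximation from the left *)

Fixpoint lastexp x :=
  match x with zero => zero | ocons a _ b => match b with zero => a | _ => lastexp b end end.

Lemma lastexp_ocons a k g : g <> zero -> lastexp (ocons a k g) = lastexp g.
Proof. destruct g; simpl; congruence. Qed.

Lemma below_lt a g k b : below a g = true -> g <> zero -> g <o ocons a k b.
Proof.
  destruct g as [|a'' ? ?]; [congruence|]. simpl. intros H _.
  apply ltb_iff in H. rewrite H; auto.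
Qed.

Lemma approx_below a th lo : nfb a = true -> nfb th = true -> th <o a ->
  nfb lo = true -> below a lo = true ->
  exists g, nfb g = true /\ lo <o g /\ below a g = true /\ g <> zero /\
            th <=o lastexp g.
Proof.
  intros Ha Hth Hlt Hlo Hb. destruct lo as [|a' k' b'].
  - exists (ocons th 0 zero). simpl. rewrite Hth, compare_refl.
    repeat split; try discriminate. apply ltb_iff; auto.
  - apply nfb_ocons in Hlo as (L1&L2&L3). simpl in Hb. apply ltb_iff in Hb.
    assert (Hk : Nat.compare k' (S k') = Lt) by (apply Nat.compare_lt_iff; lia).
    destruct (compare a' th) eqn:E.
    + exists (ocons a' (S k') zero). simpl. rewrite L1, compare_refl, Hk.
      apply compare_eq in E; subst.
      repeat split; try discriminate. apply ltb_iff; auto. rewrite compare_refl; discriminate.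
    + exists (ocons th 0 zero). simpl. rewrite Hth, E.
      repeat split; try discriminate. apply ltb_iff; auto.
      rewrite compare_refl; discriminate.
    + exists (ocons a' (S k') zero). simpl. rewrite L1, compare_refl, Hk.
      repeat split; try discriminate. apply ltb_iff; auto.
      rewrite compare_sym, E; discriminate.
Qed.

Lemma approx_block a k th lo : nfb a = true -> nfb th = true -> th <o a ->
  nfb lo = true -> lo <o ocons a k zero ->
  exists g, nfb g = true /\ lo <o g /\ g <o ocons a k zero /\ th <=o lastexp g.
Proof.
  intros H1 Hth Hlast Hlo Hlt.
  assert (Gen : forall lo', nfb lo' = true -> below a lo' = true ->
            exists g, nfb g = true /\ lo' <o g /\ g <o ocons a k zero /\
                      th <=o lastexp g).
  { intros lo' Hl1 Hl2.
    destruct (approx_below a th lo' H1 Hth Hlast Hl1 Hl2) as (g&G1&G2&G3&G4&G5).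
    exists g. repeat split; auto. apply below_lt; auto. }
  destruct lo as [|a' k' b']; [apply Gen; auto|].
  apply nfb_ocons in Hlo as (L1&L2&L3).
  destruct (compare a' a) eqn:E.
  - apply compare_eq in E; subst a'.
    apply lt_ocons in Hlt. destruct Hlt as [Hlt|[_ [Hlt|[_ Hlt]]]].
    + exfalso. apply (lt_irrefl a); auto.
    + destruct (approx_below a th b' H1 Hth Hlast L2 L3) as (g&G1&G2&G3&G4&G5).
      exists (ocons a k' g). repeat split.
      * apply nfb_ocons; auto.
      * rewrite compare_ocons_eq; auto.
      * apply lt_ocons. right. split; auto.
      * rewrite lastexp_ocons; auto.
    + destruct b'; discriminate.
  - apply Gen; [apply nfb_ocons; auto | simpl; apply ltb_iff; auto].
  - exfalso. apply lt_ocons in Hlt. destruct Hlt as [Hlt|[Hlt _]].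
    + rewrite E in Hlt; discriminate.
    + subst; rewrite compare_refl in E; discriminate.
Qed.

(** Beyond the first block, approximate inside the tail. *)
Lemma approx b0 : nfb b0 = true -> forall th lo, nfb th = true -> th <o lastexp b0 ->
  nfb lo = true -> lo <o b0 ->
  exists g, nfb g = true /\ lo <o g /\ g <o b0 /\ th <=o lastexp g.
Proof.
  induction b0 as [|a IHa k b IHb]; intros Hb0 th lo Hth Hlast Hlo Hlt.
  { destruct lo; discriminate. }
  apply nfb_ocons in Hb0 as (H1&H2&H3).
  destruct b as [|a2 k2 b2]; [apply approx_block; auto|].
  rewrite lastexp_ocons in Hlast by discriminate.
  destruct (IHb H2 th zero Hth Hlast eq_refl eq_refl) as (g&G1&G2&G3&G4).
  assert (Gz : g <> zero) by (intro; subst; discriminate).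
  destruct lo as [|a' k' b'].
  - exists (ocons a k g). repeat split; auto.
    + apply nfb_ocons. repeat split; auto.
      apply (below_mono _ _ (ocons a2 k2 b2)); auto. congruence.
    + rewrite compare_ocons_eq; auto.
    + rewrite lastexp_ocons; auto.
  - apply nfb_ocons in Hlo as (L1&L2&L3).
    assert (Hpre : exists g', nfb g' = true /\ ocons a' k' b' <o ocons a k g' /\
                              g' <o ocons a2 k2 b2 /\ th <=o lastexp g' /\ g' <> zero).
    { apply lt_ocons in Hlt. destruct Hlt as [Hlt|[-> [Hlt|[-> Hlt]]]].
      - exists g. repeat split; auto. apply lt_ocons; auto.
      - exists g. repeat split; auto. apply lt_ocons; auto.
      - destruct (IHb H2 th b' Hth Hlast L2 Hlt) as (g'&G1'&G2'&G3'&G4').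
        exists g'. repeat split; auto.
        + rewrite compare_ocons_eq; auto.
        + intro; subst; destruct b'; discriminate. }
    destruct Hpre as (g'&G1'&G2'&G3'&G4'&Gz').
    exists (ocons a k g'). repeat split; auto.
    + apply nfb_ocons. repeat split; auto.
      apply (below_mono _ _ (ocons a2 k2 b2)); auto. congruence.
    + rewrite compare_ocons_eq; auto.
    + rewrite lastexp_ocons; auto.
Qed.

Lemma nf_fin k : nfb (fin k) = true.
Proof. destruct k; reflexivity. Qed.

Lemma opow_form alpha m :
  opow_nat (omega_pow (omega_pow (fin alpha))) (S m) = ocons (ocons (fin alpha) m zero) 0 zero.
Proof.
  induction m as [|m IH]; [reflexivity|].
  unfold opow_nat in *. simpl Nat.iter in *. rewrite IH.
  unfold omega_pow. simpl. rewrite compare_refl, Nat.add_0_r. reflexivity.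
Qed.

Lemma index_form alpha m :
  omult (omega_pow (oplus (fin 1) (fin alpha))) (fin (S m)) = mulw (ocons (fin alpha) m zero).
Proof. reflexivity. Qed.

Lemma P_eq_dec {g} (a b : P g) : {a = b} + {a <> b}.
Proof.
  destruct a as [x hx], b as [y hy]. destruct (T1_eq_dec x y) as [E|E].
  - left. subst. f_equal. apply UIP_dec. apply bool_dec.
  - right. intro H. inversion H. auto.
Defined.

Lemma P_inj {g} (a b : P g) : proj1_sig a = proj1_sig b -> a = b.
Proof.
  destruct a as [x hx], b as [y hy]; simpl; intro; subst. f_equal. apply UIP_dec, bool_dec.
Qed.

Lemma P_nf {g} (a : P g) : nfb (proj1_sig a) = true.
Proof. destruct a as [x h]. simpl. apply andb_true_iff in h. tauto. Qed.

Lemma P_le {g} (a : P g) : proj1_sig a <=o g.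
Proof. destruct a as [x h]. simpl. apply andb_true_iff in h as [_ h]. apply leb_iff; auto. Qed.

Lemma ltP_iff {g} (a b : P g) : ltP a b <-> proj1_sig a <o proj1_sig b.
Proof. apply ltb_iff. Qed.

Lemma find_left_point {g} (be : P g) th lo : nfb th = true -> th <o lastexp (proj1_sig be) ->
  in_interval lo None be ->
  exists ga : P g, in_interval lo (Some be) ga /\ th <=o lastexp (proj1_sig ga).
Proof.
  intros Hth Hlt Hlo.
  set (lo0 := match lo with None => zero | Some a => proj1_sig a end).
  assert (N0 : nfb lo0 = true) by (unfold lo0; destruct lo; auto; apply P_nf).
  assert (L0 : lo0 <o proj1_sig be).
  { unfold lo0. destruct lo as [a|].
    - apply ltP_iff, Hlo.
    - destruct (proj1_sig be); auto. destruct th; discriminate. }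
  destruct (approx (proj1_sig be) (P_nf be) th lo0 Hth Hlt N0 L0) as (ga&G1&G2&G3&G4).
  assert (Hp : nfb ga && leb ga g = true).
  { apply andb_true_iff. split; auto. apply leb_iff, lt_le.
    eapply lt_le_trans; eauto. apply P_le. }
  exists (exist _ ga Hp). repeat split; auto.
  - unfold lo0 in G2. destruct lo; auto. apply ltP_iff; auto.
  - apply ltP_iff; auto.
Qed.

Lemma in_interval_left {g} lo hi (be b : P g) :
  in_interval lo (Some be) b -> in_interval lo hi be -> in_interval lo hi b.
Proof.
  intros [H1 H2] [H3 H4]. split; auto. destruct hi as [h|]; auto.
  apply ltP_iff. apply ltP_iff in H2. apply ltP_iff in H4. eapply lt_trans; eauto.
Qed.

Lemma list_max {g} (S : list (P g)) : S <> nil ->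
  exists m, In m S /\ forall b, In b S -> proj1_sig b <=o proj1_sig m.
Proof.
  induction S as [|a S IH]; intros H; [congruence|].
  destruct S as [|a2 S'].
  - exists a. split; [left; auto|]. intros b [<-|[]]. rewrite compare_refl; discriminate.
  - destruct IH as (m&Hm&Hmax); [discriminate|].
    destruct (compare (proj1_sig a) (proj1_sig m)) eqn:E.
    + exists m. split; [right; auto|]. intros b [<-|Hb]; auto. congruence.
    + exists m. split; [right; auto|]. intros b [<-|Hb]; auto. congruence.
    + exists a. split; [left; auto|]. intros b [<-|Hb].
      * rewrite compare_refl; discriminate.
      * apply (le_trans _ (proj1_sig m)); auto. rewrite compare_sym, E; discriminate.
Qed.

Lemma sumlist_app {g} (f : P g -> R) l1 l2 :
  sumlist f (l1 ++ l2) = sumlist f l1 + sumlist f l2.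
Proof. induction l1; simpl; [ring|rewrite IHl1; ring]. Qed.

Lemma sumlist_ext {g} (f h : P g -> R) l :
  (forall b, In b l -> f b = h b) -> sumlist f l = sumlist h l.
Proof. induction l; simpl; intros H; auto. rewrite H, IHl; auto. Qed.

Lemma sumlist_plus {g} (f h : P g -> R) l :
  sumlist (fun b => f b + h b) l = sumlist f l + sumlist h l.
Proof. induction l; simpl; [ring|rewrite IHl; ring]. Qed.

Lemma sumlist_scal {g} (f : P g -> R) c l :
  sumlist (fun b => c * f b) l = c * sumlist f l.
Proof. induction l; simpl; [ring|rewrite IHl; ring]. Qed.

Lemma sumlist_zero {g} (f : P g -> R) l : (forall b, In b l -> f b = 0) -> sumlist f l = 0.
Proof. induction l; simpl; intros H; auto. rewrite H, IHl; auto. ring. Qed.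

Lemma sumlist_le {g} (f h : P g -> R) l :
  (forall b, In b l -> f b <= h b) -> sumlist f l <= sumlist h l.
Proof.
  induction l as [|a l IH]; simpl; intros H. lra.
  pose proof (H a (or_introl eq_refl)). pose proof (IH (fun b Hb => H b (or_intror Hb))). lra.
Qed.

Lemma sumlist_perm {g} (f : P g -> R) l l' : Permutation l l' -> sumlist f l = sumlist f l'.
Proof. induction 1; simpl; auto; lra. Qed.

Definition inb {g} (S : list (P g)) (b : P g) : bool :=
  if in_dec P_eq_dec b S then true else false.

Lemma sumlist_filter {g} (f : P g -> R) (p : P g -> bool) l :
  sumlist f l = sumlist f (filter p l) + sumlist f (filter (fun b => negb (p b)) l).
Proof. induction l; simpl. ring. destruct (p a); simpl; rewrite IHl; ring. Qed.

Lemma sum_support {g} (f : P g -> R) F S : NoDup F -> NoDup S -> incl S F ->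
  (forall b, In b F -> ~ In b S -> f b = 0) -> sumlist f F = sumlist f S.
Proof.
  intros HF HS Hinc H0. rewrite (sumlist_filter f (inb S) F).
  rewrite (sumlist_zero f (filter (fun b => negb (inb S b)) F)).
  - rewrite Rplus_0_r. apply sumlist_perm. apply NoDup_Permutation; auto.
    apply NoDup_filter; auto.
    intro x. rewrite filter_In. unfold inb.
    destruct (in_dec P_eq_dec x S); split; intuition; discriminate.
  - intros b Hb. apply filter_In in Hb as [Hb1 Hb2]. unfold inb in Hb2.
    destruct (in_dec P_eq_dec b S); simpl in Hb2; try discriminate. apply H0; auto.
Qed.

Lemma has_sum_unique {g} (f : P g -> R) L1 L2 : has_sum f L1 -> has_sum f L2 -> L1 = L2.
Proof.
  intros H1 H2. destruct (Req_dec L1 L2) as [E|E]; auto. exfalso.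
  set (eps := Rabs (L1 - L2) / 2).
  assert (Hep : 0 < eps).
  { unfold eps. assert (L1 - L2 <> 0) by lra. apply Rabs_pos_lt in H. lra. }
  destruct (H1 eps Hep) as (F1&N1&K1). destruct (H2 eps Hep) as (F2&N2&K2).
  set (F := nodup P_eq_dec (F1 ++ F2)).
  assert (NF : NoDup F) by apply NoDup_nodup.
  specialize (K1 F NF). specialize (K2 F NF).
  assert (HK1 : Rabs (sumlist f F - L1) < eps)
    by (apply K1; intros x Hx; apply nodup_In, in_or_app; auto).
  assert (HK2 : Rabs (sumlist f F - L2) < eps)
    by (apply K2; intros x Hx; apply nodup_In, in_or_app; auto).
  unfold eps in *. revert HK1 HK2. generalize (sumlist f F). intros s K3 K4.
  pose proof (Rabs_triang (L1 - s) (s - L2)).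
  rewrite <- Rabs_Ropp in K3. replace (- (s - L1)) with (L1 - s) in K3 by ring.
  replace (L1 - s + (s - L2)) with (L1 - L2) in H by ring. lra.
Qed.

(** ** Finitely supported probability measures *)

Definition fsprob {g} (S : list (P g)) (mu : P g -> R) : Prop :=
  NoDup S /\ (forall b, 0 <= mu b) /\ (forall b, ~ In b S -> mu b = 0) /\ sumlist mu S = 1.

Lemma fs_sum {g} S (mu h : P g -> R) F : fsprob S mu -> NoDup F -> incl S F ->
  sumlist (fun b => mu b * h b) F = sumlist (fun b => mu b * h b) S.
Proof.
  intros (H1&H2&H3&H4) HF Hi. apply sum_support; auto. intros b _ Hb. rewrite H3; auto. ring.
Qed.

Lemma fs_has_sum {g} S (mu h : P g -> R) : fsprob S mu ->
  has_sum (fun b => mu b * h b) (sumlist (fun b => mu b * h b) S).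
Proof.
  intros Hf eps Heps. exists S. split; [apply Hf|].
  intros F HF Hi. rewrite (fs_sum S mu h F); auto. rewrite Rminus_diag, Rabs_R0. auto.
Qed.

Lemma pair_fs {g} S (mu x : P g -> R) t : fsprob S mu ->
  (pair_gt mu x t <-> t < sumlist (fun b => mu b * x b) S).
Proof.
  intros Hf. split.
  - intros (L&HL&Ht). rewrite (has_sum_unique _ _ _ (fs_has_sum S mu x Hf) HL). auto.
  - intro Ht. exists (sumlist (fun b => mu b * x b) S). split; auto. apply fs_has_sum; auto.
Qed.

Lemma fs_ball {g} S (mu : P g -> R) : fsprob S mu -> ball g mu.
Proof.
  intros Hf F HF. destruct Hf as (H1&H2&H3&H4).
  set (G := F ++ filter (fun b => negb (inb F b)) S).
  assert (NG : NoDup G).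
  { apply NoDup_app; auto. apply NoDup_filter; auto. intros a Ha Hb.
    apply filter_In in Hb as [_ Hb].
    unfold inb in Hb. destruct (in_dec P_eq_dec a F); simpl in Hb; congruence. }
  assert (IG : incl S G).
  { intros a Ha. apply in_or_app. destruct (in_dec P_eq_dec a F); auto.
    right. apply filter_In. split; auto.
    unfold inb. destruct (in_dec P_eq_dec a F); auto; contradiction. }
  assert (E : sumlist mu G = sumlist mu S) by (apply sum_support; auto).
  unfold G in E. rewrite sumlist_app in E.
  assert (0 <= sumlist mu (filter (fun b => negb (inb F b)) S)).
  { rewrite <- (sumlist_zero (fun _ => 0) (filter (fun b => negb (inb F b)) S)) by auto.
    apply sumlist_le. auto. }
  rewrite (sumlist_ext _ mu). lra. intros b _. apply Rabs_right. apply Rle_ge. auto.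
Qed.

Lemma fs_nonempty {g} S (n : P g -> R) : fsprob S n -> S <> nil.
Proof. intros (_&_&_&D) E. subst. simpl in D. lra. Qed.

Lemma fs_pair_lower {g} S (n x : P g -> R) m : fsprob S n ->
  (forall b, In b S -> m <= x b) -> m <= sumlist (fun b => n b * x b) S.
Proof.
  intros (A&B&C&D) H. replace m with (sumlist (fun b => m * n b) S).
  - apply sumlist_le. intros b Hb. specialize (H b Hb). specialize (B b). nra.
  - rewrite sumlist_scal, D. ring.
Qed.

Lemma indicator_val {g} (be b : P g) :
  indicator g (proj1_sig be) b = if P_eq_dec b be then 1 else 0.
Proof.
  unfold indicator, ltb. destruct (P_eq_dec b be) as [->|Hn].
  - rewrite compare_refl. reflexivity.
  - destruct (compare (proj1_sig b) (proj1_sig be)) eqn:E.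
    + apply compare_eq, P_inj in E. contradiction.
    + reflexivity.
    + rewrite compare_sym, E. reflexivity.
Qed.

Lemma fs_point {g} (be : P g) : fsprob (be :: nil) (indicator g (proj1_sig be)).
Proof.
  repeat split.
  - constructor; [intros []|constructor].
  - intro b. rewrite indicator_val. destruct P_eq_dec; lra.
  - intros b Hb. rewrite indicator_val. destruct P_eq_dec; auto.
    subst; exfalso; apply Hb; left; auto.
  - simpl. rewrite indicator_val. destruct P_eq_dec; [lra|congruence].
Qed.

Lemma pair_point {g} (be : P g) (x : P g -> R) :
  sumlist (fun b => indicator g (proj1_sig be) b * x b) (be :: nil) = x be.
Proof. simpl. rewrite indicator_val. destruct P_eq_dec; [lra|congruence]. Qed.

Lemma point_far {g} S (n : P g -> R) (be : P g) r : fsprob S n -> ~ In be S -> r < 1 ->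
  ~ l1_norm_le (fun b => indicator g (proj1_sig be) b - n b) r.
Proof.
  intros (A&B&C&D) Hn Hr H.
  assert (N1 : NoDup (be :: nil)) by (constructor; [intros []|constructor]).
  specialize (H (be :: nil) N1). simpl in H.
  rewrite indicator_val, C in H by auto. destruct P_eq_dec; [|congruence].
  rewrite Rminus_0_r, Rabs_R1 in H. lra.
Qed.

Definition disjoint {A} (S1 S2 : list A) : Prop := forall b, In b S1 -> ~ In b S2.

Lemma disjoint_sym {A} (S1 S2 : list A) : disjoint S1 S2 -> disjoint S2 S1.
Proof. intros H b H2 H1. exact (H b H1 H2). Qed.

Definition avg {g} (n1 n2 : P g -> R) : P g -> R := fun b => (n1 b + n2 b) / 2.

Lemma avg_comm {g} (n1 n2 : P g -> R) : avg n1 n2 = avg n2 n1.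
Proof. apply functional_extensionality. intro b. unfold avg. f_equal. ring. Qed.

Lemma fs_avg {g} S1 S2 (n1 n2 : P g -> R) : fsprob S1 n1 -> fsprob S2 n2 ->
  disjoint S1 S2 -> fsprob (S1 ++ S2) (avg n1 n2).
Proof.
  intros F1 F2 Hd. pose proof F1 as (A1&B1&C1&D1). pose proof F2 as (A2&B2&C2&D2).
  repeat split.
  - apply NoDup_app; auto.
  - intro b. unfold avg. specialize (B1 b); specialize (B2 b); lra.
  - intros b Hb. unfold avg.
    rewrite C1, C2; [lra| |]; intro; apply Hb; apply in_or_app; auto.
  - assert (I1 : incl S1 (S1 ++ S2)) by (intros x Hx; apply in_or_app; auto).
    assert (I2 : incl S2 (S1 ++ S2)) by (intros x Hx; apply in_or_app; auto).
    unfold avg.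
    rewrite (sumlist_ext _ (fun b => /2 * (n1 b * 1) + /2 * (n2 b * 1)))
      by (intros; unfold Rdiv; ring).
    rewrite sumlist_plus, !sumlist_scal.
    rewrite (fs_sum S1 n1 (fun _ => 1)), (fs_sum S2 n2 (fun _ => 1)); auto;
      try (apply NoDup_app; auto).
    rewrite (sumlist_ext (fun b => n1 b * 1) n1) by (intros; ring).
    rewrite (sumlist_ext (fun b => n2 b * 1) n2) by (intros; ring). lra.
Qed.

Lemma pair_avg {g} S1 S2 (n1 n2 x : P g -> R) : fsprob S1 n1 -> fsprob S2 n2 ->
  disjoint S1 S2 ->
  sumlist (fun b => avg n1 n2 b * x b) (S1 ++ S2) =
   (sumlist (fun b => n1 b * x b) S1 + sumlist (fun b => n2 b * x b) S2) / 2.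
Proof.
  intros F1 F2 Hd. pose proof F1 as (A1&B1&C1&D1). pose proof F2 as (A2&B2&C2&D2).
  assert (N : NoDup (S1 ++ S2)) by (apply NoDup_app; auto).
  unfold avg.
  rewrite (sumlist_ext _ (fun b => /2 * (n1 b * x b) + /2 * (n2 b * x b)))
    by (intros; unfold Rdiv; ring).
  rewrite sumlist_plus, !sumlist_scal.
  rewrite (fs_sum S1 n1 x), (fs_sum S2 n2 x); auto; try lra;
    intros y Hy; apply in_or_app; auto.
Qed.

Lemma pair_avg_split {g} S1 S2 (n1 n2 x : P g -> R) t : fsprob S1 n1 -> fsprob S2 n2 ->
  disjoint S1 S2 -> pair_gt (avg n1 n2) x t -> pair_gt n1 x t \/ pair_gt n2 x t.
Proof.
  intros F1 F2 Hd Hp.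
  apply (pair_fs (S1 ++ S2)) in Hp; [|apply fs_avg; auto]. rewrite pair_avg in Hp; auto.
  rewrite (pair_fs S1), (pair_fs S2); auto. lra.
Qed.

Lemma avg_far {g} S1 S2 (n1 n2 : P g -> R) r : fsprob S1 n1 -> fsprob S2 n2 ->
  disjoint S1 S2 -> r < 1/2 -> ~ l1_norm_le (fun b => avg n1 n2 b - n1 b) r.
Proof.
  intros F1 F2 Hd Hr H. pose proof F1 as (A1&B1&C1&D1). pose proof F2 as (A2&B2&C2&D2).
  specialize (H S2 A2). rewrite (sumlist_ext _ (fun b => /2 * n2 b)) in H.
  - rewrite sumlist_scal, D2 in H. lra.
  - intros b Hb. unfold avg. rewrite C1 by (intro Hb1; apply (Hd b); auto).
    rewrite Rabs_right. unfold Rdiv; ring. specialize (B2 b). lra.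
Qed.

Lemma avg_slice_wide {g} (K : (P g -> R) -> Prop) x t S1 n1 S2 n2 :
  fsprob S1 n1 -> fsprob S2 n2 -> disjoint S1 S2 -> K n1 -> K n2 ->
  slice K x t (avg n1 n2) -> ~ diam_lt (slice K x t) (1/2).
Proof.
  intros F1 F2 Hd K1 K2 [Kav Hp] (r&Hr&Hdiam).
  destruct (pair_avg_split S1 S2 n1 n2 x t F1 F2 Hd Hp) as [P1|P2].
  - apply (avg_far S1 S2 n1 n2 r); auto. apply Hdiam; split; auto.
  - apply (avg_far S2 S1 n2 n1 r); auto using disjoint_sym.
    rewrite avg_comm. apply Hdiam; split; auto.
Qed.

Lemma succ_ltnf c : nfb c = true -> ltnf c (succ c).
Proof. intro H. split; auto. apply lt_succ; auto. Qed.

Lemma pred_ltnf x c : nfb c = true /\ x = succ c -> ltnf c x.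
Proof. intros [H ->]. apply succ_ltnf; auto. Qed.

Definition deriv_step (g : T1) (x : T1)
  (rec : forall y, ltnf y x -> (P g -> R) -> Prop) : (P g -> R) -> Prop :=
  match excluded_middle_informative (x = zero) with
  | left _ => ball g
  | right _ =>
    match excluded_middle_informative (exists c, nfb c = true /\ x = succ c) with
    | left H =>
        let c := constructive_indefinite_description _ H in
        d_eps (1/2) (rec (proj1_sig c) (pred_ltnf _ _ (proj2_sig c)))
    | right _ => fun mu => forall c (H : ltnf c x), rec c H mu
    end
  end.

Definition deriv (g : T1) : T1 -> (P g -> R) -> Prop :=
  Fix ltnf_wf (fun _ => (P g -> R) -> Prop) (deriv_step g).

Lemma deriv_eq g x : deriv g x = deriv_step g x (fun y _ => deriv g y).
Proof.
  unfold deriv. apply (Fix_eq ltnf_wf (fun _ => (P g -> R) -> Prop) (deriv_step g)).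
  intros x0 f h Hfh.
  replace f with h; [reflexivity|].
  apply functional_extensionality_dep. intro y.
  apply functional_extensionality_dep. intro p. symmetry. apply Hfh.
Qed.

Lemma deriv_is_derivation g Bd : is_derivation g (1/2) (ball g) Bd (deriv g).
Proof.
  split; [|split].
  - intro mu. rewrite deriv_eq. unfold deriv_step.
    destruct (excluded_middle_informative (zero = zero)); [tauto|congruence].
  - intros b Hb _ mu. rewrite deriv_eq. unfold deriv_step.
    destruct (excluded_middle_informative (succ b = zero)) as [E|_].
    { exfalso; apply (succ_nonzero b); auto. }
    destruct (excluded_middle_informative (exists c, nfb c = true /\ succ b = succ c))
      as [H|H].
    + destruct (constructive_indefinite_description _ H) as [c [Hc E]]. simpl.
      apply succ_inj in E; auto. subst. tauto.
    + exfalso. apply H. exists b. auto.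
  - intros b Hb _ Hz Hs mu. rewrite deriv_eq. unfold deriv_step.
    destruct (excluded_middle_informative (b = zero)) as [E|_]; [congruence|].
    destruct (excluded_middle_informative (exists c, nfb c = true /\ b = succ c)) as [H|H].
    + exfalso. destruct H as [c [Hc E]]. apply (Hs c); auto.
    + split.
      * intros H1 c Hc Hlt. apply (H1 c (conj Hc (proj1 (ltb_iff c b) Hlt))).
      * intros H1 c [Hc Hlt]. apply H1; auto. apply ltb_iff; auto.
Qed.

(** ** Survival of point masses along any derivation *)

Section Survival.

Variables (g Bd : T1) (D : T1 -> (P g -> R) -> Prop).
Hypothesis HD : is_derivation g (1/2) (ball g) Bd D.

Lemma D_zero mu : D zero mu <-> ball g mu.
Proof. apply HD. Qed.

Lemma D_succ c : nfb c = true -> succ c <=o Bd ->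
  forall mu, D (succ c) mu <-> d_eps (1/2) (D c) mu.
Proof.
  intros Hc HB. apply HD; auto. apply ltb_iff. eapply lt_le_trans; eauto. apply lt_succ; auto.
Qed.

Lemma D_limit c : nfb c = true -> c <=o Bd -> is_limit c ->
  forall mu, D c mu <-> (forall c', nfb c' = true -> c' <o c -> D c' mu).
Proof.
  intros Hc HB [Hz Hs] mu. rewrite (proj2 (proj2 HD) c Hc (proj2 (leb_iff _ _) HB) Hz Hs).
  split; intros H c' Hc' Hlt; apply H; auto; apply ltb_iff; auto.
Qed.

(** Each D_c is closed under midpoints of disjointly supported probability
    measures: a slice of D_c containing the midpoint contains one of them. *)
Lemma D_avg c : nfb c = true -> c <=o Bd ->
  forall S1 n1 S2 n2, fsprob S1 n1 -> fsprob S2 n2 -> disjoint S1 S2 ->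
  D c n1 -> D c n2 -> D c (avg n1 n2).
Proof.
  induction c as [c IH] using (well_founded_induction ltnf_wf).
  intros Hc HcB S1 n1 S2 n2 F1 F2 Hd D1 D2.
  destruct (zero_succ_or_limit c) as [->|[(c'&Hc'&->)|Hl]].
  - apply D_zero, (fs_ball (S1 ++ S2)), fs_avg; auto.
  - rewrite D_succ in D1, D2 |- * by auto.
    destruct D1 as [D1a D1b], D2 as [D2a D2b].
    assert (Hc'B : c' <=o Bd) by (apply lt_le; eapply lt_le_trans; eauto; apply lt_succ; auto).
    split; [apply (IH c' (succ_ltnf c' Hc')) with S1 S2; auto|].
    intros (x&t&Hx&[Hin Hpair]&Hdiam).
    destruct (pair_avg_split S1 S2 n1 n2 x t F1 F2 Hd Hpair) as [P1|P2].
    + apply D1b. exists x, t. repeat split; auto.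
    + apply D2b. exists x, t. repeat split; auto.
  - rewrite D_limit in D1, D2 |- * by auto. intros c' Hc' Hlt.
    apply (IH c' (conj Hc' Hlt)) with S1 S2; auto.
    apply lt_le; eapply lt_le_trans; eauto.
Qed.

(** omega * e(be): the number of derivation steps the point mass at [be]
    survives. *)
Definition level (be : P g) : T1 := mulw (lastexp (proj1_sig be)).

Definition points_in (c : T1) : Prop :=
  forall be : P g, c <=o level be -> D c (indicator g (proj1_sig be)).

Definition approximable (c : T1) : Prop :=
  forall be : P g, c <o level be -> forall lo : option (P g), in_interval lo None be ->
  exists S n, fsprob S n /\ D c n /\ forall b, In b S -> in_interval lo (Some be) b.

Lemma points_in_zero : points_in zero.
Proof. intros be _. apply D_zero, (fs_ball (be :: nil)), fs_point. Qed.

Lemma approximable_zero : approximable zero.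
Proof.
  intros be Hbe lo Hlo.
  assert (Hl : zero <o lastexp (proj1_sig be)).
  { unfold level in Hbe. destruct (lastexp (proj1_sig be)); auto. }
  destruct (find_left_point be zero lo eq_refl Hl Hlo) as (ga&G1&G2).
  exists (ga :: nil), (indicator g (proj1_sig ga)).
  split; [apply fs_point|]. split.
  - apply D_zero, (fs_ball (ga :: nil)), fs_point.
  - intros b [<-|[]]; auto.
Qed.

(** A slice containing a point mass is defined by a continuous x and thus
    also contains the nearby measures given by (A), at distance 1. *)
Lemma points_in_succ c : nfb c = true -> succ c <=o Bd ->
  points_in c -> approximable c -> points_in (succ c).
Proof.
  intros Hc HB IHP IHA be Hbe. apply D_succ; auto.
  assert (Hlt : c <o level be) by (eapply lt_le_trans; eauto; apply lt_succ; auto).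
  split; [apply IHP, lt_le; auto|].
  intros (x&t&Hx&[Hin Hpair]&(r&Hr&Hdiam)).
  apply (pair_fs (be :: nil)) in Hpair; [|apply fs_point]. rewrite pair_point in Hpair.
  destruct (Hx be ((x be - t)/2)) as (lo&hi&Hin2&Hclose); [lra|].
  destruct (IHA be Hlt lo (conj (proj1 Hin2) I)) as (S&n&F&Dn&Sup).
  assert (Pn : pair_gt n x t).
  { apply (pair_fs S); auto.
    assert ((x be + t)/2 <= sumlist (fun b => n b * x b) S); [|lra].
    apply fs_pair_lower; auto. intros b Hb.
    specialize (Hclose b (in_interval_left _ _ _ _ (Sup b Hb) Hin2)).
    apply Rabs_def2 in Hclose. lra. }
  apply (point_far S n be r F).
  - intro Hb. destruct (Sup be Hb) as [_ Hb2]. apply ltP_iff in Hb2. apply (lt_irrefl _ Hb2).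
  - lra.
  - apply Hdiam; split; auto.
    apply (pair_fs (be :: nil)); [apply fs_point | rewrite pair_point; auto].
Qed.

(** Two measures from (A) with disjoint supports, the second to the right of
    the first, average to a measure surviving one more step. *)
Lemma approximable_succ c : nfb c = true -> succ c <=o Bd ->
  approximable c -> approximable (succ c).
Proof.
  intros Hc HB IHA be Hbe lo Hlo.
  assert (Hc'B : c <=o Bd) by (apply lt_le; eapply lt_le_trans; eauto; apply lt_succ; auto).
  assert (Hb' : c <o level be) by (eapply lt_trans; eauto; apply lt_succ; auto).
  destruct (IHA be Hb' lo Hlo) as (S1&n1&F1&Dn1&Sup1).
  destruct (list_max S1 (fs_nonempty S1 n1 F1)) as (m&Hm&Hmax).
  destruct (IHA be Hb' (Some m) (conj (proj2 (Sup1 m Hm)) I)) as (S2&n2&F2&Dn2&Sup2).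
  assert (Hd : disjoint S1 S2).
  { intros b Hb1 Hb2. destruct (Sup2 b Hb2) as [X _]. apply ltP_iff in X.
    apply (Hmax b Hb1). rewrite compare_sym, X. reflexivity. }
  exists (S1 ++ S2), (avg n1 n2). split; [apply fs_avg; auto|]. split.
  - apply D_succ; auto. split; [apply (D_avg c Hc Hc'B S1 n1 S2 n2); auto|].
    intros (x&t&Hx&Hin&Hdiam).
    exact (avg_slice_wide (D c) x t S1 n1 S2 n2 F1 F2 Hd Dn1 Dn2 Hin Hdiam).
  - intros b Hb. apply in_app_or in Hb as [Hb|Hb]; auto.
    destruct (Sup2 b Hb) as [X Y]. split; auto.
    destruct lo as [a|]; auto. destruct (Sup1 m Hm) as [Z _].
    apply ltP_iff. apply ltP_iff in X. apply ltP_iff in Z. eapply lt_trans; eauto.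
Qed.

Lemma points_in_limit c : nfb c = true -> c <=o Bd -> is_limit c ->
  (forall c', nfb c' = true -> c' <o c -> points_in c') -> points_in c.
Proof.
  intros Hc HB Hl IH be Hbe. apply D_limit; auto. intros c' Hc' Hlt.
  apply IH; auto. apply lt_le. eapply lt_le_trans; eauto.
Qed.

(** At a limit c = omega * d, a point of level above c is approached from the
    left by points of level at least c, whose point masses lie in D_c. *)
Lemma approximable_limit c : nfb c = true -> is_limit c ->
  points_in c -> approximable c.
Proof.
  intros Hc Hl HP be Hbe lo Hlo.
  pose proof (limit_allpos c Hc Hl) as Hap.
  assert (Hth : divw c <o lastexp (proj1_sig be)).
  { unfold level in Hbe. rewrite <- mulw_compare, mulw_divw; auto. }
  destruct (find_left_point be (divw c) lo (nf_divw c Hc Hap) Hth Hlo) as (ga&G1&G2).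
  exists (ga :: nil), (indicator g (proj1_sig ga)).
  split; [apply fs_point|]. split.
  - apply HP. unfold level. rewrite <- (mulw_divw c) by auto. rewrite mulw_compare. auto.
  - intros b [<-|[]]; auto.
Qed.

Lemma survival c : nfb c = true -> c <=o Bd -> points_in c /\ approximable c.
Proof.
  induction c as [c IH] using (well_founded_induction ltnf_wf). intros Hc HcB.
  destruct (zero_succ_or_limit c) as [->|[(c'&Hc'&->)|Hl]].
  - split; [apply points_in_zero | apply approximable_zero].
  - assert (Hc'B : c' <=o Bd) by (apply lt_le; eapply lt_le_trans; eauto; apply lt_succ; auto).
    destruct (IH c' (succ_ltnf c' Hc') Hc' Hc'B) as [IHP IHA].
    split; [apply points_in_succ | apply approximable_succ]; auto.
  - assert (HP : points_in c).
    { apply points_in_limit; auto. intros c' Hc' Hlt.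
      apply (IH c' (conj Hc' Hlt) Hc'). apply lt_le; eapply lt_le_trans; eauto. }
    split; auto. apply approximable_limit; auto.
Qed.

End Survival.

Theorem mainTheorem9 (alpha n : nat) (hn : (1 <= n)%nat) :
  let g := opow_nat (omega_pow (omega_pow (fin alpha))) n in
  let Bd := omult (omega_pow (oplus (fin 1) (fin alpha))) (fin n) in
  (exists D, is_derivation g (1/2) (ball g) Bd D) /\
  (forall D, is_derivation g (1/2) (ball g) Bd D -> D Bd (indicator g g)).
Proof.
  intros g Bd. split.
  - exists (deriv g). apply deriv_is_derivation.
  - intros D HD. destruct n as [|m]; [lia|].
    assert (Hg : g = ocons (ocons (fin alpha) m zero) 0 zero) by apply opow_form.
    assert (HBd : Bd = mulw (ocons (fin alpha) m zero)) by apply index_form.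
    assert (Hgg : nfb g && leb g g = true).
    { apply andb_true_iff. split.
      - rewrite Hg. simpl. rewrite nf_fin. reflexivity.
      - apply leb_iff. rewrite compare_refl. discriminate. }
    assert (HnfBd : nfb Bd = true) by (rewrite HBd; destruct alpha; reflexivity).
    set (top := exist _ g Hgg : P g).
    assert (Hlevel : Bd <=o level g top).
    { change (Bd <=o mulw (lastexp g)). rewrite Hg, HBd. simpl lastexp.
      rewrite compare_refl. discriminate. }
    destruct (survival g Bd D HD Bd HnfBd) as [HP _]; [rewrite compare_refl; discriminate|].
    exact (HP top Hlevel).
Qed.
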